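(* Let $\Omega\subset\mathbb{R}^N$ be a bounded open connected set, $h\in C(\Omega)$, and $\Theta(x):=\{(r,A)\in\mathbb{R}\times\mathcal{S}(N): G(A)\ge h(x)\}$, where $G(A):=\sum_{i=1}^N\arctan(\lambda_i(A))$. Suppose there exist $k\in\{1,\dots,N-1\}$ and a sequence $(x_n)_{n\in\mathbb N}\subset\Omega$ converging to $x_0\in\Omega$ such that $h(x_0)=\theta_k:=(N-2k)\frac{\pi}{2}$ and either $h(x_n)>\theta_k$ for every $n$, or $h(x_n)<\theta_k$ for every $n$. Then $\Theta$ is not Hausdorff continuous on $\Omega$.
   Context: $\mathcal{S}(N)$: real symmetric $N\times N$ matrices; $\lambda_1(A)\le\dots\le\lambda_N(A)$ its eigenvalues. On $\mathbb{R}\times\mathcal{S}(N)$ use the norm $\|(r,A)\|=\max\{|r|,\max_i|\lambda_i(A)|\}$ and the Hausdorff distance $d_{\mathcal H}(\Phi,\Psi)=\inf\{\varepsilon>0:\Phi\subset N_\varepsilon(\Psi),\Psi\subset N_\varepsilon(\Phi)\}\in[0,\infty]$ on closed sets. $\Theta$ is Hausdorff continuous on $\Omega$ if for all $x\in\Omega$, $\eta>0$ there is $\delta>0$ with $d_{\mathcal H}(\Theta(x),\Theta(y))<\eta$ whenever $y\in\Omega$, $|x-y|<\delta$. *)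

From HB Require Import structures.
From mathcomp Require Import all_boot all_order all_algebra.
From mathcomp Require Import all_classical all_reals all_analysis.
Set Implicit Arguments. Unset Strict Implicit. Unset Printing Implicit Defensive.
Import Order.TTheory GRing.Theory Num.Theory.
Import numFieldNormedType.Exports.
Local Open Scope classical_set_scope.
Local Open Scope ring_scope.

Section Defs.
Variables (R : realType) (N : nat).

Definition is_spectrum (A : 'M[R]_N) (s : seq R) : Prop :=
  char_poly A = \prod_(l <- s) ('X - l%:P).

(* the sequence lambda_1(A) <= ... <= lambda_N(A) (for symmetric A the
   characteristic polynomial splits over R, so the first branch is taken;
   the sorted list is independent of the choice) *)
Definition eigenvalues (A : 'M[R]_N) : seq R :=
  match pselect (exists s, is_spectrum A s) with
  | left H => sort <=%R (projT1 (cid H))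
  | right _ => [::]
  end.

Definition lambda (A : 'M[R]_N) (i : 'I_N) : R := nth 0 (eigenvalues A) i.

Definition symmetric (A : 'M[R]_N) : Prop := A^T = A.

Definition Gop (A : 'M[R]_N) : R := \sum_(i < N) atan (lambda A i).

Definition pnorm (p : R * 'M[R]_N) : R :=
  Num.max `|p.1| (\big[Num.max/0]_(i < N) `|lambda p.2 i|).

Definition psub (p q : R * 'M[R]_N) : R * 'M[R]_N := (p.1 - q.1, p.2 - q.2).

Definition nbhd_eps (e : R) (Psi : set (R * 'M[R]_N)) : set (R * 'M[R]_N) :=
  [set p | exists2 q, Psi q & pnorm (psub p q) < e].

Definition hausdorff_dist (Phi Psi : set (R * 'M[R]_N)) : \bar R :=
  ereal_inf [set e%:E | e in [set e : R | 0 < e /\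
     Phi `<=` nbhd_eps e Psi /\ Psi `<=` nbhd_eps e Phi]].

Definition enorm (x : 'rV[R]_N) : R := Num.sqrt (\sum_(i < N) x ord0 i ^+ 2).

Definition hausdorff_continuous (Omega : set 'rV[R]_N)
    (Theta : 'rV[R]_N -> set (R * 'M[R]_N)) : Prop :=
  forall x, Omega x -> forall eta : R, 0 < eta ->
    exists2 delta : R, 0 < delta & forall y, Omega y -> enorm (x - y) < delta ->
      (hausdorff_dist (Theta x) (Theta y) < eta%:E)%E.

Definition Theta (h : 'rV[R]_N -> R) (x : 'rV[R]_N) : set (R * 'M[R]_N) :=
  [set p | symmetric p.2 /\ h x <= Gop p.2].

Definition theta_k (k : nat) : R := (N%:R - 2 * k%:R) * (pi / 2).

End Defs.

From Pilot Require Import Defs.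
From mathcomp Require Import all_boot all_order all_algebra.
From mathcomp Require Import all_classical all_reals all_analysis.
From mathcomp Require Import complex sesquilinear spectral.
From mathcomp Require Import zify ring lra.
Import Order.TTheory GRing.Theory Num.Theory.
Import numFieldNormedType.Exports.
Local Open Scope ring_scope.
Set Implicit Arguments. Unset Strict Implicit. Unset Printing Implicit Defensive.

(* Take A = diag(-M, ..., -M, L, ..., L) with k entries -M.  For large M and L,
   G(A) = -k atan M + (N - k) atan L is close to theta_k, above or below it
   depending on the relative sizes of M and L.  By the min-max principle, a
   symmetric B with |lambda_i(A - B)| < 1 has at least k eigenvalues below 1 - M
   and all of them below L + 1, so G(B) <= -k atan (M - 1) + (N - k) atan (L + 1),
   which is also close to theta_k.  Tuning M and L shows that {G >= s} is not
   within Hausdorff distance 1 of {G >= t} whenever s <= theta_k <= t and s < t.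
   As h(x_n) tends to theta_k = h(x_0) strictly from one side, the sets
   Theta(x_n) and Theta(x_0) stay at Hausdorff distance at least 1. *)

Lemma char_poly_conj (F : comNzRingType) n (Q P D : 'M[F]_n) :
  Q *m P = 1%:M -> char_poly (Q *m D *m P) = char_poly D.
Proof.
move=> QP.
have QPp : map_mx polyC Q *m map_mx polyC P = 1%:M.
  by rewrite -map_mxM QP map_mx1.
have E : char_poly_mx (Q *m D *m P) =
    map_mx polyC Q *m char_poly_mx D *m map_mx polyC P.
  rewrite /char_poly_mx mulmxBr mulmxBl !map_mxM; congr (_ - _).
  by rewrite scalar_mxC -mulmxA QPp mulmx1.
by rewrite /char_poly E !det_mulmx mulrAC -det_mulmx QPp det1 mul1r.
Qed.

Section Spectrum.
Variables (R : realType) (N : nat).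
Local Notation C := R[i].
Local Notation toC := (real_complex R).
Local Open Scope sesquilinear_scope.

Definition spectral_decomp (B : 'M[R]_N) (P : 'M[C]_N) (d : 'I_N -> R) : Prop :=
  P \is unitarymx /\ map_mx toC B = P^t* *m diag_mx (\row_i toC (d i)) *m P.

Lemma map_diag_mx_toC (a : 'I_N -> R) :
  map_mx toC (diag_mx (\row_i a i)) = diag_mx (\row_i toC (a i)).
Proof.
by apply/matrixP => i j; rewrite !mxE; case: eqP => _; rewrite ?mulr1n ?mulr0n.
Qed.

Lemma diag_spectral_decomp (a : 'I_N -> R) :
  spectral_decomp (diag_mx (\row_i a i)) 1%:M a.
Proof.
split; last by rewrite map_diag_mx_toC trmx1 map_mx1 mul1mx mulmx1.
by apply/unitarymxP; rewrite trmx1 map_mx1 mulmx1.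
Qed.

Lemma symmetric_spectral_decomp (B : 'M[R]_N) :
  B^T = B -> exists P d, spectral_decomp B P d.
Proof.
move=> BT.
have Bherm : map_mx toC B \is hermsymmx.
  rewrite qualifE /= expr0 scale1r; apply/eqP/matrixP => i j.
  rewrite !mxE -[in RHS]BT mxE /= conj_Creal //.
  by apply/complex_realP; eexists.
have /orthomx_spectralP Bdiag := hermitian_normalmx Bherm.
have /mxOverP Breal := hermitian_spectral_diag_real Bherm.
exists (spectralmx (map_mx toC B)).
exists (fun i => complex.Re (spectral_diag (map_mx toC B) 0 i)).
split; first exact: spectral_unitarymx.
rewrite -(invmx_unitary (spectral_unitarymx _)) {1}Bdiag.
by congr (_ *m diag_mx _ *m _); apply/rowP => i; rewrite mxE RRe_real.
Qed.

Lemma spectral_decomp_spectrum (B : 'M[R]_N) P d :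
  spectral_decomp B P d -> is_spectrum B [seq d i | i <- enum 'I_N].
Proof.
move=> [/unitarymxP Pu BP]; apply: (@map_poly_inj _ _ toC).
rewrite map_char_poly BP char_poly_conj; last exact: mulmx1C.
rewrite char_poly_trig ?diag_mx_is_trig // map_prod_XsubC big_map big_enum /=.
by apply: eq_bigr => i _; rewrite !mxE eqxx mulr1n.
Qed.

Lemma perm_eq_eigenvalues (B : 'M[R]_N) s :
  is_spectrum B s -> perm_eq (eigenvalues B) s.
Proof.
move=> Bs; rewrite /eigenvalues; case: pselect => [Bspec|]; last by case; exists s.
case: cid => s' /= Bs'; rewrite perm_sort; apply: prod_XsubC_eq.
by rewrite -Bs' -Bs.
Qed.

Lemma size_eigenvalues (B : 'M[R]_N) s : is_spectrum B s -> size (eigenvalues B) = N.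
Proof.
move=> Bs; rewrite (perm_size (perm_eq_eigenvalues Bs)).
by have := size_char_poly B; rewrite Bs size_prod_XsubC => -[].
Qed.

Lemma Gop_spectral_decomp (B : 'M[R]_N) P d :
  spectral_decomp B P d -> Gop B = \sum_i atan (d i).
Proof.
move=> /spectral_decomp_spectrum Bs.
rewrite -big_enum -(big_map d xpredT atan) -(perm_big _ (perm_eq_eigenvalues Bs)).
by rewrite (big_nth 0) (size_eigenvalues Bs) big_mkord.
Qed.

Lemma spectral_decomp_lambda (B : 'M[R]_N) P d i :
  spectral_decomp B P d -> exists j, lambda B j = d i.
Proof.
move=> /spectral_decomp_spectrum Bs.
have : d i \in eigenvalues B.
  by rewrite (perm_mem (perm_eq_eigenvalues Bs)) map_f ?mem_enum.
rewrite -index_mem (size_eigenvalues Bs) => ltiN.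
by exists (Ordinal ltiN); rewrite /lambda nth_index // -index_mem (size_eigenvalues Bs).
Qed.

Lemma lambda_le_pnorm (p : R * 'M[R]_N) i : `|lambda p.2 i| <= pnorm p.
Proof.
by rewrite /pnorm le_max (le_bigmax 0 (fun i => `|lambda p.2 i|) i) orbT.
Qed.

End Spectrum.

Section QuadraticForm.
Variables (C : numClosedFieldType) (N : nat).
Local Open Scope sesquilinear_scope.
Implicit Types (x : 'rV[C]_N) (S : {set 'I_N}).

Definition qform (M : 'M[C]_N) x : C := (x *m M *m x^t*) 0 0.
Definition sqnorm x : C := (x *m x^t*) 0 0.

Lemma sqnormE x : sqnorm x = \sum_i x 0 i * (x 0 i)^*.
Proof. by rewrite /sqnorm mxE; apply: eq_bigr => i _; rewrite !mxE. Qed.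

Lemma sqnorm_gt0 x : x != 0 -> 0 < sqnorm x.
Proof.
move=> xn0; rewrite sqnormE lt_def sumr_ge0 ?andbT => [|i _]; last exact: mul_conjC_ge0.
apply: contra xn0 => /eqP /(psumr_eq0P (fun j _ => mul_conjC_ge0 (x 0 j))) x0.
by apply/eqP/rowP => i; apply/eqP; rewrite mxE -mul_conjC_eq0 x0.
Qed.

Lemma qformB (X Y : 'M[C]_N) x : qform (X - Y) x = qform X x - qform Y x.
Proof.
rewrite /qform mulmxBr mulmxBl.
by move: (x *m X *m x^t*) (x *m Y *m x^t*) => U W; rewrite !mxE.
Qed.

Lemma qform_diag (a : 'I_N -> C) x :
  qform (diag_mx (\row_i a i)) x = \sum_i a i * (x 0 i * (x 0 i)^*).
Proof.
rewrite /qform mxE; apply: eq_bigr => i _; rewrite !mxE (bigD1 i) //= big1.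
  by rewrite !mxE eqxx mulr1n addr0 mulrCA mulrA.
by move=> j /negbTE ji; rewrite !mxE ji mulr0n mulr0.
Qed.

Lemma qform_diag_ge (a : 'I_N -> C) c x :
  (forall i, x 0 i != 0 -> c <= a i) ->
  c * sqnorm x <= qform (diag_mx (\row_i a i)) x.
Proof.
move=> ca; rewrite qform_diag sqnormE mulr_sumr; apply: ler_sum => i _.
have [->|/ca xi] := eqVneq (x 0 i) 0; first by rewrite mul0r !mulr0.
by rewrite ler_wpM2r ?mul_conjC_ge0.
Qed.

Lemma qform_diag_le (a : 'I_N -> C) c x :
  (forall i, x 0 i != 0 -> a i <= c) ->
  qform (diag_mx (\row_i a i)) x <= c * sqnorm x.
Proof.
move=> ac; rewrite qform_diag sqnormE mulr_sumr; apply: ler_sum => i _.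
have [->|/ac xi] := eqVneq (x 0 i) 0; first by rewrite mul0r !mulr0.
by rewrite ler_wpM2r ?mul_conjC_ge0.
Qed.

Lemma qform_conj (P D : 'M[C]_N) x :
  qform (P^t* *m D *m P) x = qform D (x *m P^t*).
Proof. by rewrite /qform trmx_mul map_mxM trmxCK !mulmxA. Qed.

Lemma sqnorm_unitary (P : 'M[C]_N) x :
  P \is unitarymx -> sqnorm (x *m P^t*) = sqnorm x.
Proof.
move=> /unitarymxP Pu.
by rewrite /sqnorm trmx_mul map_mxM trmxCK mulmxA -(mulmxA x) (mulmx1C Pu) mulmx1.
Qed.

Definition coord_mx S : 'M[C]_(#|S|, N) :=
  \matrix_(j, i) (enum_val j == i)%:R.

Lemma coord_mx_unitary S : coord_mx S \is unitarymx.
Proof.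
apply/unitarymxP/matrixP => j j'; rewrite !mxE (bigD1 (enum_val j)) //= big1.
  by rewrite !mxE eqxx mul1r addr0 conjC_nat (inj_eq enum_val_inj) eq_sym.
by move=> i /negbTE ji; rewrite !mxE eq_sym ji mul0r.
Qed.

Lemma coord_mx_row_eq0 S (z : 'rV[C]_#|S|) i :
  i \notin S -> (z *m coord_mx S) 0 i = 0.
Proof.
move=> iS; rewrite mxE big1 // => j _; rewrite mxE.
by case: eqP => [ji|_]; [by rewrite -ji enum_valP in iS | rewrite mulr0].
Qed.

End QuadraticForm.

Arguments coord_mx {C N} S.

Lemma exists_set_card (T : finType) k : (k <= #|T|)%N -> exists S : {set T}, #|S| = k.
Proof.
elim: k => [|k IHk] kT; first by exists finset.set0; rewrite cards0.
have [S Sk] := IHk (ltnW kT).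
have : (0 < #|~: S|)%N by have := cardsC S; lia.
case/card_gt0P => x; rewrite inE => xS.
by exists (x |: S); rewrite cardsU1 xS Sk.
Qed.

Lemma sum_le_two_level (R : realFieldType) n (g : R -> R) (f : 'I_n -> R)
    (S : {set 'I_n}) (c c' : R) :
  {homo g : x y / x <= y} -> c <= c' ->
  (#|S| <= #|[set i | (f i < c)%R]|)%N -> (forall i, f i < c') ->
  \sum_i g (f i) <= #|S|%:R * g c + #|~: S|%:R * g c'.
Proof.
move=> gup cc' ST fc'; set T := [set i | f i < c].
have lT : \sum_(i in T) g (f i) <= g c *+ #|T|.
  by rewrite -sumr_const; apply: ler_sum => i; rewrite inE => /ltW/gup.
have lTC : \sum_(i in [predC T]) g (f i) <= g c' *+ #|[predC T]|.
  by rewrite -sumr_const; apply: ler_sum => i _; exact/gup/ltW.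
rewrite (bigID (mem T)) /=; apply: le_trans (lerD lT lTC) _.
rewrite -(mulr_natl (g c)) -(mulr_natl (g c')).
have : (#|S|%:R <= #|T|%:R :> R) by rewrite ler_nat.
have : (#|T|%:R + #|[predC T]|%:R = #|S|%:R + #|~: S|%:R :> R).
  by rewrite -!natrD cardC cardsC.
have := gup _ _ cc'; nra.
Qed.

Section MinMaxCounting.
Variables (R : realType) (N : nat).
Local Notation C := R[i].
Local Notation toC := (real_complex R).
Local Open Scope sesquilinear_scope.
Implicit Types (B E : 'M[R]_N) (x : 'rV[C]_N).

Lemma qform_spectral_ge B P d c x :
  spectral_decomp B P d -> (forall i, (x *m P^t*) 0 i != 0 -> c <= d i) ->
  toC c * sqnorm x <= qform (map_mx toC B) x.
Proof.
move=> [Pu ->] cd; rewrite qform_conj -(sqnorm_unitary x Pu).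
by apply: qform_diag_ge => i /cd; rewrite lecR.
Qed.

Lemma qform_ge_lambda E c x :
  E^T = E -> (forall i, c <= lambda E i) -> toC c * sqnorm x <= qform (map_mx toC E) x.
Proof.
move=> /symmetric_spectral_decomp [P [d Ed]] cE.
apply: (qform_spectral_ge Ed) => i _.
by have [j <-] := spectral_decomp_lambda i Ed.
Qed.

(* Min-max principle: otherwise V meets the span of the eigenvectors of the
   eigenvalues >= c. *)
Lemma rank_le_card_spectrum_lt B P d m (V : 'M[C]_(m, N)) c' c :
  spectral_decomp B P d -> \rank V = m -> c' < c ->
  (forall x, (x <= V)%MS -> qform (map_mx toC B) x <= toC c' * sqnorm x) ->
  (m <= #|[set i | (d i < c)%R]|)%N.
Proof.
move=> Bd rV c'c Vc'; have [Pu _] := Bd.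
set S := ~: [set i | d i < c]; set W := coord_mx S *m P.
rewrite leqNgt; apply/negP => mS.
have rW : \rank W = #|S|.
  rewrite mxrankMfree ?mxrank_unitary ?coord_mx_unitary //.
  by rewrite row_free_unit unitarymx_unit.
have : (0 < \rank (V :&: W))%N.
  have := mxrank_sum_cap V W; have := rank_leq_col (V + W)%MS.
  have := cardsC [set i | d i < c]; rewrite -/S card_ord rV rW; lia.
rewrite lt0n mxrank_eq0 => VWn0.
set x := nz_row (V :&: W)%MS.
have xVW := nz_row_sub (V :&: W)%MS.
have /submxP [z xz] : (x <= W)%MS := submx_trans xVW (capmxSr _ _).
have xP : x *m P^t* = z *m coord_mx S by rewrite xz -!mulmxA (unitarymxP Pu) mulmx1.
have cx : toC c * sqnorm x <= qform (map_mx toC B) x.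
  apply: (qform_spectral_ge Bd) => i; rewrite xP; apply: contraR => iS.
  by apply/eqP/coord_mx_row_eq0; rewrite !inE negbK ltNge.
have := le_trans cx (Vc' x (submx_trans xVW (capmxSl _ _))).
by rewrite ler_pM2r ?sqnorm_gt0 ?nz_row_eq0 // lecR leNgt c'c.
Qed.

Lemma card_le_card_spectrum_lt (a : 'I_N -> R) B P d rho v c :
  B^T = B -> spectral_decomp B P d ->
  (forall i, - rho <= lambda (diag_mx (\row_i a i) - B) i) -> v + rho < c ->
  (#|[set i | (a i <= v)%R]| <= #|[set i | (d i < c)%R]|)%N.
Proof.
move=> BT Bd rhoE vc; set S := [set i | a i <= v]; set A := diag_mx (\row_i a i).
apply: (rank_le_card_spectrum_lt (c' := v + rho) (V := coord_mx S) Bd _ vc).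
  by apply: mxrank_unitary; apply: coord_mx_unitary.
move=> _ /submxP [z ->]; set y := z *m coord_mx S.
have Esym : (A - B)^T = A - B by rewrite linearB /= tr_diag_mx BT.
have qA : qform (map_mx toC A) y <= toC v * sqnorm y.
  rewrite map_diag_mx_toC; apply: qform_diag_le => i; rewrite lecR.
  by apply: contraR => iv; apply/eqP/coord_mx_row_eq0; rewrite inE.
have := qform_ge_lambda y Esym rhoE.
rewrite map_mxB qformB rmorphN mulNr lerNl opprB => qBA.
by rewrite rmorphD mulrDl; apply: le_trans (lerD qA qBA); rewrite subrKC.
Qed.

Definition two_level_diag (S : {set 'I_N}) (M L : R) : 'M[R]_N :=
  diag_mx (\row_i if i \in S then - M else L).

Lemma two_level_diag_sym S M L : (two_level_diag S M L)^T = two_level_diag S M L.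
Proof. exact: tr_diag_mx. Qed.

Lemma Gop_two_level_diag S M L :
  Gop (two_level_diag S M L) = #|S|%:R * atan (- M) + #|~: S|%:R * atan L.
Proof.
rewrite (Gop_spectral_decomp (diag_spectral_decomp _)) (bigID (mem S)) /=.
rewrite (eq_bigr (fun=> atan (- M))); last by move=> i ->.
rewrite [X in _ + X](eq_bigr (fun=> atan L)); last by move=> i /negbTE ->.
rewrite !sumr_const !mulr_natl; congr (_ + _ *+ _).
by apply: eq_card => i; rewrite !inE.
Qed.

Lemma Gop_le_two_level S M L rho B :
  - M <= L -> rho < 1 -> B^T = B ->
  (forall i, - rho <= lambda (two_level_diag S M L - B) i) ->
  Gop B <= #|S|%:R * atan (1 - M) + #|~: S|%:R * atan (L + 1).
Proof.
move=> ML rho1 BT rhoE; have [P [d Bd]] := symmetric_spectral_decomp BT.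
have count := card_le_card_spectrum_lt BT Bd rhoE.
have low : (#|S| <= #|[set i | (d i < 1 - M)%R]|)%N.
  apply: leq_trans (count (- M) _ _); last lra.
  by apply/subset_leq_card/fintype.subsetP => i iS; rewrite !inE iS.
have high i : d i < L + 1.
  suff /setP/(_ i) : [set i | d i < L + 1] = [set: 'I_N] by rewrite !inE.
  apply/eqP; rewrite eqEcard finset.subsetT cardsT card_ord /=.
  apply: leq_trans (count L _ _); last lra.
  rewrite -{1}(card_ord N) -cardsT; apply/subset_leq_card/fintype.subsetP => j _.
  by rewrite !inE; case: ifP.
rewrite (Gop_spectral_decomp Bd); apply: sum_le_two_level low high => //.
- exact: le_atan.
- lra.
Qed.

End MinMaxCounting.

Section AtanGap.
Variable R : realType.

Lemma exists_pi2_sub_atan_lt (p e : R) :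
  0 < p -> 0 < e -> exists2 T, 0 <= T & p * (pi / 2 - atan T) < e.
Proof.
move=> p0 e0; have ep0 : 0 < e / p by rewrite divr_gt0.
have [M [_ Matan]] := cvgr_dist_lt _ _ (@cvgy_atan R) _ ep0.
exists (`|M| + 1); first by rewrite addr_ge0.
rewrite mulrC -ltr_pdivlMr //; apply: le_lt_trans (Matan _ _); first exact: ler_norm.
by apply: le_lt_trans (ler_norm M) _; rewrite ltrDl.
Qed.

Lemma exists_two_level_gap (p q s t : R) :
  0 < p -> 0 < q -> s < t -> s <= (q - p) * (pi / 2) <= t ->
  exists M L, [/\ 0 <= M, 0 <= L, s <= p * atan (- M) + q * atan L
                & p * atan (1 - M) + q * atan (L + 1) < t].
Proof.
move=> p0 q0 st; have [θ θE] : {θ | θ = (q - p) * (pi / 2)} by eexists.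
rewrite -θE => /andP[sθ θt].
have atan_pi2 (c : R) x : 0 < c -> c * atan x < c * (pi / 2).
  by move=> c0; rewrite ltr_pM2l ?atan_ltpi2.
have pi2_atan (x : R) : 0 < pi / 2 - atan x by rewrite subr_gt0 atan_ltpi2.
have [θt' | tθ] := ltP θ t.
- have [T1 T1ge T1gap] : exists2 T, 0 <= T & p * (pi / 2 - atan T) < t - θ.
    by apply: exists_pi2_sub_atan_lt; rewrite ?subr_gt0.
  have [T2 T2ge T2gap] := exists_pi2_sub_atan_lt q0 (mulr_gt0 p0 (pi2_atan (T1 + 1))).
  exists (T1 + 1), T2; split => //; first lra.
  + rewrite atanN; lra.
  + have -> : 1 - (T1 + 1) = - T1 by ring.
    by rewrite atanN; have := atan_pi2 _ (T2 + 1) q0; lra.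
- have sθ' : s < θ by apply: lt_le_trans st tθ.
  have [T2 T2ge T2gap] : exists2 T, 0 <= T & q * (pi / 2 - atan T) < θ - s.
    by apply: exists_pi2_sub_atan_lt; rewrite ?subr_gt0.
  have [T1 T1ge T1gap] := exists_pi2_sub_atan_lt p0 (mulr_gt0 q0 (pi2_atan (T2 + 1))).
  exists (T1 + 1), T2; split => //; first lra.
  + by rewrite atanN; have := atan_pi2 _ (T1 + 1) p0; lra.
  + have -> : 1 - (T1 + 1) = - T1 by ring.
    by rewrite atanN; lra.
Qed.

End AtanGap.

Local Open Scope classical_set_scope.

Lemma mx_entry_le_norm (R : realType) m n (A : 'M[R]_(m, n)) i j : `|A i j| <= `|A|.
Proof.
rewrite -[`|A|]/(mx_norm A) mx_normrE.
exact: (le_bigmax 0 (fun ij : 'I_m * 'I_n => `|A ij.1 ij.2|) (i, j)).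
Qed.

Lemma enorm_le_norm (R : realType) N (x : 'rV[R]_N) : enorm x <= Num.sqrt N%:R * `|x|.
Proof.
rewrite /enorm -[`|x|]normr_id -sqrtr_sqr -sqrtrM // ler_wsqrtr //.
have entry i : x ord0 i ^+ 2 <= `|x| ^+ 2.
  by rewrite -real_normK ?num_real // !expr2 ler_pM ?mx_entry_le_norm.
apply: le_trans (ler_sum _ (fun i _ => entry i)) _.
by rewrite sumr_const card_ord mulr_natl.
Qed.

Lemma exists_enorm_sub_lt (R : realType) N (x_ : nat -> 'rV[R]_N) (x0 : 'rV[R]_N)
    (delta : R) :
  x_ @ \oo --> x0 -> 0 < delta -> exists n, enorm (x0 - x_ n) < delta.
Proof.
move=> x_x0 delta0; have sN0 := sqrtr_ge0 (N%:R : R).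
have eps0 : 0 < delta / (Num.sqrt N%:R + 1) by rewrite divr_gt0 // ltr_wpDl.
have [n xn] := filter_ex (cvgr_dist_lt _ _ x_x0 _ eps0).
exists n; apply: le_lt_trans (enorm_le_norm _) _.
apply: le_lt_trans (ler_wpM2l sN0 (ltW xn)) _.
by rewrite mulrA ltr_pdivrMr ?ltr_wpDl //; lra.
Qed.

Lemma hausdorff_dist_lt (R : realType) N (Phi Psi : set (R * 'M[R]_N)) r :
  (hausdorff_dist Phi Psi < r%:E)%E ->
  exists2 e, e < r & Phi `<=` nbhd_eps e Psi /\ Psi `<=` nbhd_eps e Phi.
Proof. by case/ereal_inf_lt => _ [e [_ inc] <-]; rewrite lte_fin; exists e. Qed.

Section Superlevel.
Variables (R : realType) (N : nat).

Definition superlevel (s : R) : set (R * 'M[R]_N) :=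
  [set p | Defs.symmetric p.2 /\ s <= Gop p.2].

Lemma superlevel_not_subset_nbhd (S : {set 'I_N}) s t e :
  (0 < #|S| < N)%N -> s < t -> s <= theta_k R N #|S| <= t -> e <= 1 ->
  ~ superlevel s `<=` nbhd_eps e (superlevel t).
Proof.
move=> /andP[S0 SN] st sθt e1 sub.
have p0 : 0 < #|S|%:R :> R by rewrite ltr0n.
have q0 : 0 < #|~: S|%:R :> R by rewrite ltr0n; have := cardsC S; rewrite card_ord; lia.
have θE : theta_k R N #|S| = (#|~: S|%:R - #|S|%:R) * (pi / 2).
  by rewrite /theta_k -[N in N%:R](card_ord N) -(cardsC S) natrD; ring.
rewrite θE in sθt.
have [M [L [M0 L0 sA Bt]]] := exists_two_level_gap p0 q0 st sθt.
have Ss : superlevel s (0, two_level_diag S M L).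
  by split; [exact: two_level_diag_sym | rewrite Gop_two_level_diag].
have [[r B] [/= BT tB] /= dist] := sub _ Ss.
have : Gop B <= #|S|%:R * atan (1 - M) + #|~: S|%:R * atan (L + 1).
  apply: Gop_le_two_level BT _ => [||i]; [lra | exact: lt_le_trans dist e1 |].
  have /= := lambda_le_pnorm (psub (0, two_level_diag S M L) (r, B)) i.
  by rewrite ler_norml => /andP[].
lra.
Qed.

End Superlevel.

Theorem proposition6p17 (R : realType) (N : nat) (Omega : set 'rV[R]_N)
  (h : 'rV[R]_N -> R) (k : nat) (x_ : nat -> 'rV[R]_N) (x0 : 'rV[R]_N) :
  bounded_set Omega -> open Omega -> connected Omega ->
  {within Omega, continuous h} ->
  (1 <= k <= N.-1)%N ->
  (forall n, Omega (x_ n)) -> Omega x0 -> x_ @ \oo --> x0 ->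
  h x0 = theta_k R N k ->
  ((forall n, theta_k R N k < h (x_ n)) \/ (forall n, h (x_ n) < theta_k R N k)) ->
  ~ hausdorff_continuous Omega (Theta h).
Proof.
move=> _ _ _ _ /andP[k1 kN] xO x0O x_x0 hx0 side cont.
have [delta delta0 near_x0] := cont x0 x0O 1 ltr01.
have [n xn] := exists_enorm_sub_lt x_x0 delta0.
have [e /ltW e1 [sub sub']] := hausdorff_dist_lt (near_x0 _ (xO n) xn).
have [S Sk] : exists S : {set 'I_N}, #|S| = k.
  by apply: exists_set_card; rewrite card_ord; lia.
have S0N : (0 < #|S| < N)%N by rewrite Sk; lia.
rewrite -hx0 in side; case: side => /(_ n) side.
- apply: (superlevel_not_subset_nbhd S0N side _ e1 sub).
  by rewrite Sk -hx0 lexx ltW.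
- apply: (superlevel_not_subset_nbhd S0N side _ e1 sub').
  by rewrite Sk -hx0 lexx ltW.
Qed.
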